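(* Let $\mathbf t_1,\mathbf t_2$ be hyper-terms with disjoint supports, $I=\mathrm{supp}(\mathbf t_1)$, and $Q$ a post hyper-assertion. Then $$\Pi_I.\Big(\big(\mathrm{proj}(\mathbf t_2)\Rightarrow\mathrm{proj}(\mathbf t_1)\big)\wedge\mathrm{wp}\,(\mathbf t_1\uplus\mathbf t_2)\,\{Q\}\Big)\ \vdash\ \mathrm{wp}\,\mathbf t_2\,\{\Pi_I.Q\}.$$
   Context: Setting. $\mathrm{Val}=\mathbb{Z}$; $\mathrm{PVar}$ is a countably infinite set of program variables; a store is a function $s:\mathrm{PVar}\to\mathrm{Val}$; indices are $\mathrm{Idx}=\mathbb{N}$. Terms of a first-order imperative language are generated by $t ::= v \mid x \mid * \mid t\oplus t \mid \mathtt{skip}\mid x:=t \mid t;t \mid \mathtt{if}\ t\ \mathtt{then}\ t\ \mathtt{else}\ t \mid \mathtt{while}\ t\ \mathtt{do}\ t$, with a nondeterministic big-step semantics $t,s\Downarrow v,s'$. A hyper-term $\mathbf t$ is a finitely supported partial function from $\mathrm{Idx}$ to terms; a hyper-store is a total function $\mathbf s:\mathrm{Idx}\to\mathrm{Store}$; a hyper-return-value is a finitely supported partial function $\mathbf v:\mathrm{Idx}\rightharpoonup\mathrm{Val}$. $\uplus$ denotes union of maps with disjoint supports. $\mathbf t,\mathbf s\Downarrow\mathbf v,\mathbf s'$ holds iff for every $i\in\mathrm{supp}(\mathbf t)$, $\mathbf t(i),\mathbf s(i)\Downarrow\mathbf v(i),\mathbf s'(i)$, and for every $i\notin\mathrm{supp}(\mathbf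 t)$, $\mathbf s'(i)=\mathbf s(i)$ and $\mathbf v(i)$ is undefined. A hyper-assertion is a predicate on hyper-stores; a post hyper-assertion is an upward-closed map $Q$ from hyper-return-values to hyper-assertions (if $Q(\mathbf v)(\mathbf s)$ and $\mathbf v'$ agrees with $\mathbf v$ on $\mathrm{supp}(\mathbf v)$ then $Q(\mathbf v')(\mathbf s)$). Connectives are pointwise. Entailment $P\vdash R$ means $\forall\mathbf s.\ P(\mathbf s)\Rightarrow R(\mathbf s)$. $\mathrm{wp}\,\mathbf t\,\{Q\}(\mathbf s):\iff\forall\mathbf v,\mathbf s'.\ (\mathbf t,\mathbf s\Downarrow\mathbf v,\mathbf s')\Rightarrow Q(\mathbf v)(\mathbf s')$. Projectability. $\mathrm{proj}(\mathbf t)(\mathbf s):\iff\exists\mathbf v,\mathbf s'.\ \mathbf t,\mathbf s\Downarrow\mathbf v,\mathbf s'$. Projection modality. For $I\subseteq\mathrm{Idx}$ and a hyper-assertion $P$: $(\Pi_I.P)(\mathbf s):\iff\exists\mathbf s'.\ P(\mathbf s[i:\mathbf s'(i)\mid i\in I])$, where $\mathbf s[i:\mathbf s'(i)\mid i\in I]$ agrees with $\mathbf s'$ on $I$ and with $\mathbf s$ elsewhere. For a post hyper-assertion $Q$: $\Pi_I.Q:=\lambda\mathbf r.\ \exists\mathbf v.\ \Pi_I.\big(Q(\mathbf r[i:\mathbf v(i)\mid i\in I])\big)$, with $\mathbf v$ ranging over hyper-return-values. *)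

From Stdlib Require Import ZArith.
Open Scope Z_scope.

Definition Val := Z.
Definition PVar := nat.
Definition Store := PVar -> Val.
Definition Idx := nat.

Definition upd (s : Store) (x : PVar) (v : Val) : Store :=
  fun y => if Nat.eqb y x then v else s y.

(* Terms; the binary operator ⊕ is given by its semantic function. *)
Inductive term : Type :=
| TVal (v : Val)
| TVar (x : PVar)
| TStar
| TOp (op : Val -> Val -> Val) (t1 t2 : term)
| TSkip
| TAssign (x : PVar) (t : term)
| TSeq (t1 t2 : term)
| TIf (c t1 t2 : term)
| TWhile (c t : term).

(* Nondeterministic big-step semantics  t, s ⇓ v, s'.
   Conventions: skip, assignment and while return 0; x := t stores the value
   of t; if/while test "nonzero = true". *)
Inductive bigstep : term -> Store -> Val -> Store -> Prop :=
| BS_Val v s : bigstep (TVal v) s v s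
| BS_Var x s : bigstep (TVar x) s (s x) s
| BS_Star v s : bigstep TStar s v s
| BS_Op op t1 t2 s s1 s2 v1 v2 :
    bigstep t1 s v1 s1 -> bigstep t2 s1 v2 s2 ->
    bigstep (TOp op t1 t2) s (op v1 v2) s2
| BS_Skip s : bigstep TSkip s 0 s
| BS_Assign x t s s1 v :
    bigstep t s v s1 -> bigstep (TAssign x t) s 0 (upd s1 x v)
| BS_Seq t1 t2 s s1 s2 v1 v2 :
    bigstep t1 s v1 s1 -> bigstep t2 s1 v2 s2 -> bigstep (TSeq t1 t2) s v2 s2
| BS_IfT c t1 t2 s s1 s2 vc v :
    bigstep c s vc s1 -> vc <> 0 -> bigstep t1 s1 v s2 ->
    bigstep (TIf c t1 t2) s v s2
| BS_IfF c t1 t2 s s1 s2 v :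
    bigstep c s 0 s1 -> bigstep t2 s1 v s2 ->
    bigstep (TIf c t1 t2) s v s2
| BS_WhileF c t s s1 :
    bigstep c s 0 s1 -> bigstep (TWhile c t) s 0 s1
| BS_WhileT c t s s1 s2 s3 vc vb v :
    bigstep c s vc s1 -> vc <> 0 -> bigstep t s1 vb s2 ->
    bigstep (TWhile c t) s2 v s3 -> bigstep (TWhile c t) s v s3.

Definition fin_supp {A : Type} (f : Idx -> option A) : Prop :=
  exists n : nat, forall i, (n <= i)%nat -> f i = None.

Definition supp {A : Type} (f : Idx -> option A) : Idx -> bool :=
  fun i => match f i with Some _ => true | None => false end.

(* Hyper-terms, hyper-stores, hyper-return-values
   (finiteness of supports is imposed by explicit hypotheses). *)
Definition hterm := Idx -> option term.
Definition hstore := Idx -> Store.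
Definition hval := Idx -> option Val.

Definition disjoint_supp {A B : Type} (f : Idx -> option A) (g : Idx -> option B) : Prop :=
  forall i, f i = None \/ g i = None.

(* ⊎ : union of maps (meaningful for disjoint supports). *)
Definition hunion (t1 t2 : hterm) : hterm :=
  fun i => match t1 i with Some t => Some t | None => t2 i end.

Definition hbigstep (t : hterm) (s : hstore) (v : hval) (s' : hstore) : Prop :=
  forall i, match t i with
            | Some ti => exists vi, v i = Some vi /\ bigstep ti (s i) vi (s' i)
            | None => s' i = s i /\ v i = None
            end.

Definition hassn := hstore -> Prop.
Definition hpost := hval -> hassn.

Definition upward_closed (Q : hpost) : Prop :=
  forall (v v' : hval) (s : hstore),
    fin_supp v -> fin_supp v' ->
    (forall i x, v i = Some x -> v' i = Some x) ->
    Q v s -> Q v' s.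

Definition hentails (P R : hassn) : Prop := forall s, P s -> R s.
Definition hand (P R : hassn) : hassn := fun s => P s /\ R s.
Definition himpl (P R : hassn) : hassn := fun s => P s -> R s.

Definition wp (t : hterm) (Q : hpost) : hassn :=
  fun s => forall v s', hbigstep t s v s' -> Q v s'.

Definition proj (t : hterm) : hassn :=
  fun s => exists v s', hbigstep t s v s'.

Definition hupd {A : Type} (I : Idx -> bool) (s s' : Idx -> A) : Idx -> A :=
  fun i => if I i then s' i else s i.

Definition Pi (I : Idx -> bool) (P : hassn) : hassn :=
  fun s => exists s' : hstore, P (hupd I s s').

Definition Pi_post (I : Idx -> bool) (Q : hpost) : hpost :=
  fun r => fun s => exists v : hval, fin_supp v /\ Pi I (Q (hupd I r v)) s.


(* Since t1 and t2 act on disjoint indices, a run of t2 from s can be replayed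
   from any store that differs from s only on supp t1; projectability of t1 then
   yields a run of t1 there, and the two runs glue into a run of t1 ⊎ t2 whose
   result agrees with the t2-run outside supp t1.  The wp hypothesis applied to
   this glued run is exactly the witness demanded by Π_I.Q. *)

Lemma hbigstep_hupd_outside (I : Idx -> bool) (t : hterm) (s s' s0 : hstore) (v : hval) :
  (forall i, I i = true -> t i = None) ->
  hbigstep t s v s' -> hbigstep t (hupd I s s0) v (hupd I s' s0).
Proof.
  intros Hout Hrun i. specialize (Hrun i). unfold hupd.
  destruct (I i) eqn:Ei.
  - rewrite (Hout i Ei) in Hrun |- *. split; [reflexivity | apply Hrun].
  - exact Hrun.
Qed.

Lemma hbigstep_fin_supp (t : hterm) (s s' : hstore) (v : hval) :
  fin_supp t -> hbigstep t s v s' -> fin_supp v.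
Proof.
  intros [n Hn] Hrun. exists n. intros i Hi.
  specialize (Hrun i). rewrite (Hn i Hi) in Hrun. apply Hrun.
Qed.

(* No disjointness is needed: [hunion] lets [t1] win wherever both are defined. *)
Lemma hbigstep_hunion (t1 t2 : hterm) (s s0 s1' s2' : hstore) (v1 v2 : hval) :
  hbigstep t1 (hupd (supp t1) s s0) v1 s1' -> hbigstep t2 s v2 s2' ->
  hbigstep (hunion t1 t2) (hupd (supp t1) s s0)
           (hupd (supp t1) v2 v1) (hupd (supp t1) s2' s1').
Proof.
  intros Hrun1 Hrun2 i.
  specialize (Hrun1 i). specialize (Hrun2 i).
  unfold hunion, hupd, supp in *.
  destruct (t1 i) as [u1|]; [exact Hrun1 | exact Hrun2].
Qed.

Lemma proj_hupd_outside (t : hterm) (I : Idx -> bool) (s s0 : hstore) :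
  (forall i, I i = true -> t i = None) ->
  proj t s -> proj t (hupd I s s0).
Proof.
  intros Hout [v [s' Hrun]].
  exists v, (hupd I s' s0). exact (hbigstep_hupd_outside I t s s' s0 v Hout Hrun).
Qed.

Lemma disjoint_supp_outside {A B : Type} (f : Idx -> option A) (g : Idx -> option B) :
  disjoint_supp f g -> forall i, supp f i = true -> g i = None.
Proof.
  intros Hdis i Hi. unfold supp in Hi.
  destruct (Hdis i) as [Hf | Hg]; [rewrite Hf in Hi; discriminate | exact Hg].
Qed.

Theorem mainTheorem10 (t1 t2 : hterm) (Q : hpost) :
  fin_supp t1 -> fin_supp t2 -> disjoint_supp t1 t2 ->
  upward_closed Q ->
  hentails
    (Pi (supp t1) (hand (himpl (proj t2) (proj t1)) (wp (hunion t1 t2) Q)))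
    (wp t2 (Pi_post (supp t1) Q)).
Proof.
  intros Hfin1 _ Hdis _ s [s0 [Hproj Hwp]] v s' Hrun2.
  assert (Hout : forall i, supp t1 i = true -> t2 i = None)
    by exact (disjoint_supp_outside t1 t2 Hdis).
  assert (Hproj2 : proj t2 (hupd (supp t1) s s0)).
  { apply proj_hupd_outside; [exact Hout | exists v, s'; exact Hrun2]. }
  destruct (Hproj Hproj2) as [v1 [s1' Hrun1]].
  exists v1. split; [exact (hbigstep_fin_supp t1 _ _ _ Hfin1 Hrun1) |].
  exists s1'. apply Hwp.
  exact (hbigstep_hunion t1 t2 _ _ _ _ _ _ Hrun1 Hrun2).
Qed.
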